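(* There exist an instance domain $\mathcal{X}$ and a hypothesis class $\mathcal{H}$ consisting of a single hypothesis such that the following holds for all integers $k,l\ge 0$: if $k<l$, then for any integer $m\ge 0$ there exists a strategy of the adversary, all of whose presented sequences satisfy the $l$-bias assumption with respect to $\mathcal{H}$, that forces any deterministic learning algorithm guaranteeing at most $k$ mistakes (on all sequences satisfying the $l$-bias assumption with respect to $\mathcal{H}$) to have at least $m+1$ nontrivial rounds.
   Context: Online classification with abstention: at each round $t$ the adversary presents $x_t\in\mathcal{X}$, the learner predicts $\hat y_t\in\{-1,+1,\bot\}$ ($\bot$ = abstain), then the adversary reveals $y_t\in\{-1,+1\}$. A mistake is a round with $\hat y_t=-y_t$; a round is nontrivial if the learner makes a mistake or abstains on it. A deterministic learner's prediction is a deterministic function of the past labeled examples and the current example; the adversary may choose examples and labels adaptively. Hypotheses are maps $\mathcal{X}\to\{-1,+1\}$. For hypotheses $h_1,h_2$, $h_1\cdot h_2$ is the pointwise product, and for classes $\mathcal{H}_1\cdot\mathcal{H}_2=\{h_1\cdot h_2:h_i\in\mathcal{H}_i\}$. $\mathcal{C}^l$ is the class of functions $x\mapsto 1-2I(x\in D)$ for subsets $D\subseteq\mathcal{X}$ with $|D|\le l$, and $\mathcal{H}^l=\mathcal{H}\cdot\mathcal{C}^l$. A sequence $(x_1,y_1),\dots,(x_n,y_n)$ satisfies the $l$-bias assumption with respect to $\mathcal{H}$ if some $h\in\mathcal{H}^l$ has $h(x_t)=y_t$ for all $t$. An algorithm guarantees at most $k$ mistakes if on every admissible sequence it makes at most $k$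 mistakes. *)

From mathcomp Require Import all_boot.
Set Implicit Arguments. Unset Strict Implicit. Unset Printing Implicit Defensive.

(* Labels {-1,+1} are encoded as bool: true = +1, false = -1.
   Predictions {-1,+1,bot} are encoded as option bool: None = abstain (bot). *)

Section Online.
Variable X : eqType.

Definition hyp := X -> bool.

Definition learner := seq (X * bool) -> X -> option bool.

(* l-bias assumption w.r.t. the class H = {h0}: some h in H^l = H . C^l,
   i.e. h = h0 * c_D with |D| <= l (c_D x = -1 iff x in D), is consistent
   with the sequence.  Since (h0 * c_D)(x) = -h0(x) for x in D and h0(x)
   otherwise, in the bool encoding this is: *)
Definition prod_CD (h0 : hyp) (D : seq X) : hyp :=
  fun x => if x \in D then ~~ h0 x else h0 x.

Definition lbias (l : nat) (h0 : hyp) (s : seq (X * bool)) : Prop :=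
  exists D : seq X, size D <= l /\ all (fun xy => prod_CD h0 D xy.1 == xy.2) s.

Fixpoint transcript (L : learner) (past : seq (X * bool)) (s : seq (X * bool))
  : seq (X * bool * option bool) :=
  match s with
  | [::] => [::]
  | (x, y) :: s' => (x, y, L past x) :: transcript L (rcons past (x, y)) s'
  end.

Definition is_mistake (r : X * bool * option bool) : bool :=
  r.2 == Some (~~ r.1.2).

Definition is_nontrivial (r : X * bool * option bool) : bool :=
  r.2 != Some r.1.2.

Definition mistakes (L : learner) (s : seq (X * bool)) : nat :=
  count is_mistake (transcript L [::] s).

Definition guarantees (k l : nat) (h0 : hyp) (L : learner) : Prop :=
  forall s : seq (X * bool), lbias l h0 s -> mistakes L s <= k.

(* It sees the full history
   (examples, labels and the learner's predictions), chooses whether to stop,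
   the next example, and -- after seeing the learner's prediction -- the label.
   adv_bound is an a-priori bound on the number of rounds (finite interaction). *)
Record adversary := Adversary {
  adv_bound : nat;
  adv_stop  : seq (X * bool * option bool) -> bool;
  adv_x     : seq (X * bool * option bool) -> X;
  adv_y     : seq (X * bool * option bool) -> X -> option bool -> bool
}.

Definition unlabel (r : X * bool * option bool) : X * bool := r.1.

Fixpoint run_aux (A : adversary) (L : learner) (fuel : nat)
  (hist : seq (X * bool * option bool)) : seq (X * bool * option bool) :=
  match fuel with
  | 0 => hist
  | S f =>
    if adv_stop A hist then hist else
    let x := adv_x A hist in
    let p := L (map unlabel hist) x in
    let y := adv_y A hist x p in
    run_aux A L f (rcons hist (x, y, p))
  end.

Definition run (A : adversary) (L : learner) : seq (X * bool * option bool) :=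
  run_aux A L (adv_bound A) [::].

Definition nontrivial_rounds (A : adversary) (L : learner) : nat :=
  count is_nontrivial (run A L).

End Online.

From mathcomp Require Import all_boot zify.

Set Implicit Arguments. Unset Strict Implicit. Unset Printing Implicit Defensive.

(* Take h0 = +1 on fresh points 0, 1, 2, ...  The adversary answers -1 to a +1
   prediction as long as it has used fewer than l such flips, and +1 otherwise;
   the sequence then stays l-biased, and every flip is a mistake.  A learner
   making at most k < l mistakes therefore never exhausts the budget, so each of
   its predictions is an abstention or is contradicted: every round is
   nontrivial. *)

Lemma count_rcons (T : Type) (a : pred T) s x :
  count a (rcons s x) = count a s + a x.
Proof. by rewrite -cats1 count_cat /= addn0. Qed.

Section Interaction.
Variables (X : eqType) (A : adversary X) (L : learner X).

Definition next_round (h : seq (X * bool * option bool)) : X * bool * option bool :=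
  let x := adv_x A h in
  let p := L (map (@unlabel X) h) x in
  (x, adv_y A h x p, p).

Lemma run_aux_ind (P : seq (X * bool * option bool) -> Prop) f h :
  (forall h, P h -> ~~ adv_stop A h -> P (rcons h (next_round h))) ->
  P h -> P (run_aux A L f h).
Proof.
move=> P_step; elim: f h => [//|f IHf] h Ph /=.
by case: ifP => // stop_h; apply/IHf/P_step; rewrite ?stop_h.
Qed.

Lemma run_ind (P : seq (X * bool * option bool) -> Prop) :
  (forall h, P h -> ~~ adv_stop A h -> P (rcons h (next_round h))) ->
  P [::] -> P (run A L).
Proof. exact: run_aux_ind. Qed.

Lemma run_aux_transcript f h : exists t, run_aux A L f h = h ++ t /\
  transcript L (map (@unlabel X) h) (map (@unlabel X) t) = t.
Proof.
elim: f h => [|f IHf] h /=; first by exists [::]; rewrite cats0.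
case: ifP => _; first by exists [::]; rewrite cats0.
have [t [-> t_tr]] := IHf (rcons h (next_round h)).
exists (next_round h :: t); split; first by rewrite cat_rcons.
by move: t_tr; rewrite map_rcons /= => ->.
Qed.

Lemma transcript_run : transcript L [::] (map (@unlabel X) (run A L)) = run A L.
Proof. by rewrite /run; have [t [-> t_tr]] := run_aux_transcript (adv_bound A) [::]. Qed.

Lemma mistakes_run :
  mistakes L (map (@unlabel X) (run A L)) = count (@is_mistake X) (run A L).
Proof. by rewrite /mistakes transcript_run. Qed.

Section NeverStopping.
Hypothesis never_stop : forall h, adv_stop A h = false.

Lemma size_run_aux f h : size (run_aux A L f h) = size h + f.
Proof.
elim: f h => [|f IHf] h /=; first by rewrite addn0.
by rewrite never_stop IHf size_rcons addSnnS.
Qed.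

Lemma size_run : size (run A L) = adv_bound A.
Proof. exact: size_run_aux. Qed.

End NeverStopping.

End Interaction.

Lemma mem_disagreements (X : eqType) (h0 : hyp X) (s : seq (X * bool)) :
  uniq (map fst s) -> forall xy, xy \in s ->
  (xy.1 \in [seq xy'.1 | xy' <- s & h0 xy'.1 != xy'.2]) = (h0 xy.1 != xy.2).
Proof.
elim: s => [//|xy0 s IHs] /= /andP[fresh_xy0 s_uniq] xy.
have disagreement_in_s x : x \in [seq xy'.1 | xy' <- s & h0 xy'.1 != xy'.2] -> x \in map fst s.
  by case/mapP=> xy'; rewrite mem_filter => /andP[_ xy's] ->; apply: map_f.
rewrite in_cons => /orP[/eqP-> | xy_s].
  case: ifP => _; first by rewrite mem_head.
  by apply/idP => /disagreement_in_s; rewrite (negPf fresh_xy0).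
have xy_ne : xy.1 != xy0.1.
  by apply: contraNneq fresh_xy0 => <-; apply: map_f.
by case: ifP => _; rewrite /= ?in_cons ?(negPf xy_ne) IHs.
Qed.

Lemma lbias_uniq (X : eqType) l (h0 : hyp X) (s : seq (X * bool)) :
  uniq (map fst s) -> count (fun xy => h0 xy.1 != xy.2) s <= l -> lbias l h0 s.
Proof.
move=> s_uniq disagree_le.
exists [seq xy.1 | xy <- s & h0 xy.1 != xy.2].
split; first by rewrite size_map size_filter.
apply/allP => xy xy_s; rewrite /prod_CD mem_disagreements //.
by case: (h0 xy.1); case: xy.2.
Qed.

Definition flips (h : seq (nat * bool * option bool)) : nat :=
  count (fun r => ~~ r.1.2) h.

Definition flip_adversary (l m : nat) : adversary nat :=
  Adversary m.+1 (fun _ => false) size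
    (fun h _ p => ~~ ((p == Some true) && (flips h < l))).

Section FlipAdversary.
Variables (l m : nat) (L : learner nat).

Local Notation flip_run := (run (flip_adversary l m) L).

Lemma flip_run_points : map fst (map (@unlabel nat) flip_run) = iota 0 (size flip_run).
Proof.
elim/run_ind: _ => // h points_h _.
by rewrite !map_rcons points_h size_rcons -addn1 iotaD cats1.
Qed.

Lemma flips_run_le : flips flip_run <= l.
Proof.
elim/run_ind: _ => // h flips_h _; rewrite /flips count_rcons -/(flips h) /= negbK.
case: ltnP => [lt_h | _]; last by rewrite andbF addn0.
by rewrite andbT; case: (_ == _); rewrite ?addn1 ?addn0.
Qed.

Lemma flips_run_le_mistakes : flips flip_run <= count (@is_mistake nat) flip_run.
Proof.
elim/run_ind: _ => // h flips_h _; rewrite /flips !count_rcons -/(flips h).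
set mistakes_h := count _ h; rewrite /is_mistake /= negbK.
by case: (L _ _) => [[]|]; case: ltnP => _; rewrite /= ?eqxx /=; lia.
Qed.

Lemma flip_run_nontrivial : flips flip_run < l -> all (@is_nontrivial nat) flip_run.
Proof.
elim/run_ind: _ => // h nontrivial_h _.
rewrite /flips count_rcons all_rcons => lt_flips.
have lt_h : flips h < l by apply: leq_ltn_trans lt_flips; apply: leq_addr.
rewrite nontrivial_h // /is_nontrivial /= lt_h andbT.
by case: (L _ _) => [[]|].
Qed.

End FlipAdversary.

Theorem mainTheorem1 :
  exists (X : eqType) (h0 : X -> bool),
  forall k l : nat, k < l ->
  forall m : nat,
  exists A : adversary X,
    (forall L : learner X, lbias l h0 (map (@unlabel X) (run A L))) /\
    (forall L : learner X, guarantees k l h0 L ->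
       m.+1 <= nontrivial_rounds A L).
Proof.
exists nat, (fun _ => true) => k l lt_kl m.
have lbias_run L : lbias l (fun _ => true) (map (@unlabel nat) (run (flip_adversary l m) L)).
  apply: lbias_uniq; first by rewrite flip_run_points iota_uniq.
  by rewrite count_map; apply: flips_run_le.
exists (flip_adversary l m); split=> // L guarantee_k.
have := guarantee_k _ (lbias_run L); rewrite mistakes_run => mistakes_le_k.
have /flip_run_nontrivial : flips (run (flip_adversary l m) L) < l.
  exact: leq_ltn_trans (flips_run_le_mistakes l m L) (leq_ltn_trans mistakes_le_k lt_kl).
by rewrite all_count /nontrivial_rounds => /eqP->; rewrite size_run.
Qed.
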